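(* Let $G$ be a finite group and $K$ a quadratic extension of $\mathbb{Q}$ with ring of integers $\mathfrak{o}_K$. If $M_2(K)$ is a Wedderburn component of the group algebra $K[G]$, then $\mathbb{Z}^2$ embeds in $\mathcal{U}_1(\mathfrak{o}_K[G])$; in particular $\mathcal{U}_1(\mathfrak{o}_K[G])$ is not hyperbolic.
   Context: $\mathcal{U}_1(\mathfrak{o}_K[G])$ is the group of units of augmentation $1$ in the group ring $\mathfrak{o}_K[G]$. A Wedderburn component of the semisimple algebra $K[G]$ is a simple direct factor in its Wedderburn decomposition. Hyperbolic means Gromov-hyperbolic. *)

From HB Require Import structures.
From mathcomp Require Import all_boot all_order all_algebra all_fingroup all_field.
Set Implicit Arguments. Unset Strict Implicit. Unset Printing Implicit Defensive.
Import GRing.Theory.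
Local Open Scope ring_scope.

Section GroupRing.
Variables (R : nzRingType) (gT : finGroupType).

Definition group_ring := {ffun gT -> R^o}.
HB.instance Definition _ := GRing.Lmodule.on group_ring.

Definition gr_one : group_ring := [ffun x => (x == 1%g)%:R].
Definition gr_mul (a b : group_ring) : group_ring :=
  [ffun x => \sum_(y : gT) a y * b (y^-1 * x)%g].

Lemma gr_mulA : associative gr_mul.
Proof.
move=> a b c; apply/ffunP=> x; rewrite /gr_mul !ffunE; apply: esym.
under eq_bigr => y _ do rewrite ffunE mulr_suml.
rewrite exchange_big /=.
apply: eq_bigr => z _.
rewrite ffunE mulr_sumr.
rewrite (reindex_inj (mulgI z)) /=.
apply: eq_bigr => w _.
by rewrite mulKg mulrA invMg mulgA.
Qed.

Lemma gr_mul1r : left_id gr_one gr_mul.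
Proof.
move=> b; apply/ffunP=> x; rewrite ffunE (bigD1 1%g) //= !ffunE eqxx mul1r.
rewrite invg1 mul1g big1 ?addr0 // => y /negbTE ny1.
by rewrite ffunE ny1 mul0r.
Qed.

Lemma gr_mulr1 : right_id gr_one gr_mul.
Proof.
move=> a; apply/ffunP=> x; rewrite ffunE (bigD1 x) //= !ffunE mulVg eqxx mulr1.
rewrite big1 ?addr0 // => y nyx; rewrite ffunE.
have -> : (y^-1 * x == 1)%g = false.
  by apply/negbTE; apply: contra nyx => /eqP h; apply/eqP; rewrite -[x](mulKVg y) h mulg1.
by rewrite mulr0.
Qed.

Lemma gr_mulDl : left_distributive gr_mul +%R.
Proof.
move=> a b c; apply/ffunP=> x; rewrite !ffunE -big_split /=.
by apply: eq_bigr => y _; rewrite ffunE mulrDl.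
Qed.

Lemma gr_mulDr : right_distributive gr_mul +%R.
Proof.
move=> a b c; apply/ffunP=> x; rewrite !ffunE -big_split /=.
by apply: eq_bigr => y _; rewrite ffunE mulrDr.
Qed.

Lemma gr_one_neq0 : gr_one != 0.
Proof.
apply/eqP => /ffunP /(_ 1%g); rewrite !ffunE eqxx => /eqP.
by rewrite oner_eq0.
Qed.

HB.instance Definition _ := GRing.Zmodule_isNzRing.Build group_ring
  gr_mulA gr_mul1r gr_mulr1 gr_mulDl gr_mulDr gr_one_neq0.

Lemma gr_scaleAl (k : R) (u v : group_ring) : k *: (u * v) = (k *: u) * v.
Proof.
apply/ffunP=> x; rewrite !ffunE scaler_sumr.
by apply: eq_bigr => y _; rewrite !ffunE scalerAl.
Qed.

HB.instance Definition _ := GRing.Lmodule_isLalgebra.Build R group_ring gr_scaleAl.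

Definition augmentation (u : group_ring) : R := \sum_(g : gT) u g.

End GroupRing.

Definition algebraic_integer (K : fieldExtType rat) (x : K) : Prop :=
  exists p : {poly int}, p \is monic /\ root (map_poly (fun z : int => z%:~R : K) p) x.

Definition in_OK_G (K : fieldExtType rat) (gT : finGroupType)
  (u : group_ring K gT) : Prop := forall g : gT, algebraic_integer (u g).

Definition U1 (K : fieldExtType rat) (gT : finGroupType)
  (u : group_ring K gT) : Prop :=
  [/\ in_OK_G u,
      exists2 v : group_ring K gT, in_OK_G v & u * v = 1 /\ v * u = 1
    & augmentation u = 1].

Definition is_Wedderburn_component_Mn (K : fieldType) (A : lalgType K) (n : nat) : Prop :=
  exists (B : lalgType K) (f : A -> ('M[K]_n.+1 * B)%type),
    [/\ bijective f, linear f & monoid_morphism f].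

Definition Z2_embeds_in (A : nzRingType) (H : A -> Prop) : Prop :=
  exists phi : (int * int)%type -> A,
    [/\ injective phi, forall x, H (phi x)
      & forall x y, phi (x + y) = phi x * phi y].

(* Gromov products are doubled to stay integral.                       *)
Definition word_in (A : nzRingType) (S : seq A) (w : seq A) : bool :=
  all (fun s => s \in S) w.

Definition word_dist (A : nzRingType) (S : seq A) (x y : A) (n : nat) : Prop :=
  (exists2 w, word_in S w & size w = n /\ x * \prod_(s <- w) s = y) /\
  (forall w, word_in S w -> x * \prod_(s <- w) s = y -> (n <= size w)%N).

Definition hyperbolic (A : nzRingType) (H : A -> Prop) : Prop :=
  exists S : seq A,
    [/\ forall s, s \in S -> H s,
        forall s, s \in S -> exists2 t, t \in S & s * t = 1 /\ t * s = 1,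
        forall h, H h -> exists2 w, word_in S w & \prod_(s <- w) s = h
      & exists delta : nat,
        forall (x y z w : A) (dxy dyz dxz dwx dwy dwz : nat),
          H x -> H y -> H z -> H w ->
          word_dist S x y dxy -> word_dist S y z dyz -> word_dist S x z dxz ->
          word_dist S w x dwx -> word_dist S w y dwy -> word_dist S w z dwz ->
          let gp_xz := (dwx%:Z + dwz%:Z - dxz%:Z)%R in
          let gp_xy := (dwx%:Z + dwy%:Z - dxy%:Z)%R in
          let gp_yz := (dwy%:Z + dwz%:Z - dyz%:Z)%R in
          (Num.min gp_xy gp_yz - (2 * delta)%:Z <= gp_xz)%R].

From HB Require Import structures.
From mathcomp Require Import all_boot all_order all_algebra all_fingroup all_field.
From mathcomp Require Import zify ring.
From Stdlib Require Import Classical ClassicalEpsilon.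
Set Implicit Arguments. Unset Strict Implicit. Unset Printing Implicit Defensive.
Import Order.TTheory GRing.Theory Num.Theory.
Local Open Scope ring_scope.

(* A Wedderburn component M_2(K) of K[G] yields a nonzero n in K[G] with
   (a n)(b n) = 0 for all a, b in K (the preimage of the matrix unit e_12).
   For an irrational algebraic integer beta of K and a positive integer m with
   m n in o_K[G], the map (i, j) |-> 1 + (i + j beta) m n is then an injective
   homomorphism from Z^2 into U_1(o_K[G]).
   A hyperbolic group contains no Z^2: if g is a long element of the copy of
   Z^2, each element c of length at most L of the copy commutes with g, so the
   geodesic from c to c g = g c fellow-travels a geodesic from 1 to g, and c is
   determined by one of the 2 L + 1 middle points of the latter and an element
   of the ball of radius 4 delta + 1. So the copy has O(L) elements of length
   at most L, whereas Z^2 has quadratically many. *)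

Section AlgebraicIntegers.
Variable K : fieldExtType rat.

Lemma algebraic_integerE (x : K) :
  algebraic_integer x <-> integralOver (intr : int -> K) x.
Proof. by split=> [[p [mp rp]]|[p mp rp]]; exists p. Qed.

Lemma algebraic_integerD (x y : K) :
  algebraic_integer x -> algebraic_integer y -> algebraic_integer (x + y).
Proof.
move=> /algebraic_integerE ix /algebraic_integerE iy.
exact/algebraic_integerE/integral_add.
Qed.

Lemma algebraic_integerM (x y : K) :
  algebraic_integer x -> algebraic_integer y -> algebraic_integer (x * y).
Proof.
move=> /algebraic_integerE ix /algebraic_integerE iy.
exact/algebraic_integerE/integral_mul.
Qed.

Lemma algebraic_integerN (x : K) : algebraic_integer x -> algebraic_integer (- x).
Proof. by move=> /algebraic_integerE ix; apply/algebraic_integerE/integral_opp. Qed.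

Lemma algebraic_integer_int (z : int) : algebraic_integer (z%:~R : K).
Proof. exact/algebraic_integerE/(integral_id (intr : {rmorphism int -> K})). Qed.

Lemma algebraic_integer_nat (n : nat) : algebraic_integer (n%:R : K).
Proof. by have := algebraic_integer_int n%:Z; rewrite pmulrn. Qed.

Lemma algebraic_integer_quadratic (z : K) (a b : int) :
  z * z = a%:~R * z + b%:~R -> algebraic_integer z.
Proof.
move=> ez; exists ('X^2 - (a%:P * 'X + b%:P)); split.
  rewrite monicE lead_coefDl ?lead_coefXn // size_polyXn size_polyN size_MXaddC.
  by case: ifP => // _; rewrite size_polyC; case: (a != 0).
rewrite /root rmorphB /= rmorphD /= !rmorphM /= !map_polyX !map_polyC /= !hornerE.
by rewrite ez subrr.
Qed.

Lemma rat_combination_eq0 (b : K) (r s : rat) :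
  b \notin <[1]>%VS -> r%:A + s%:A * b = 0 -> r = 0 /\ s = 0.
Proof.
rewrite -!in_algE => b_irr ersb.
have s0 : s = 0.
  apply: contraNeq b_irr => ns0; apply/vlineP; exists (- r / s).
  have ns0K : in_alg K s != 0 by rewrite fmorph_eq0.
  apply: (mulfI ns0K); rewrite -in_algE -(rmorphM (in_alg K)) [s * _]mulrC.
  rewrite divfK // rmorphN.
  by apply/eqP; rewrite -addr_eq0 addrC ersb.
by move: ersb; rewrite s0 rmorph0 mul0r addr0 => /eqP; rewrite fmorph_eq0 => /eqP.
Qed.

Section QuadraticField.
Hypothesis dimK2 : \dim (fullv : {vspace K}) = 2%N.

Lemma quadratic_relation (y : K) : exists p q : rat, y * y = p%:A * y + q%:A.
Proof.
have [/vlineP [r ->]|y_irr] := boolP (y \in <[1]>%VS).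
  by exists r, 0; rewrite scale0r addr0 mulr_algl.
have span1y : (<[1]> + <[y]> = fullv)%VS.
  apply/eqP; rewrite eqEdim subvf /= dimK2 leqNgt; apply/negP => lt_dim.
  have := geq_leqif (dimv_leqif_eq (addvSl <[1 : K]> <[y]>)).
  rewrite dim_vline oner_neq0 /= => le1y.
  have /eqP e1y : (<[1 : K]> == <[1]> + <[y]>)%VS by rewrite -le1y -ltnS.
  by move: y_irr; rewrite e1y (subvP (addvSr _ _)) ?memv_line.
have : y * y \in (<[1]> + <[y]>)%VS by rewrite span1y memvf.
case/memv_addP => u /vlineP [a ->] [v /vlineP [b ->] ->].
by exists b, a; rewrite addrC mulr_algl.
Qed.

Lemma exists_nat_scale_integral (y : K) :
  exists2 d : nat, (0 < d)%N & algebraic_integer (d%:R * y).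
Proof.
have [p [q eyy]] := quadratic_relation y.
set dp := denq p; set dq := denq q; set D : int := dp * dq.
have D_gt0 : 0 < D by rewrite mulr_gt0 ?denq_gt0.
exists (absz D); first by rewrite absz_gt0 gt_eqF.
have intrZ (z : int) : z%:~R = (z%:~R : rat) *: (1 : K) by rewrite scaler_int.
rewrite -[(absz D)%:R]/((absz D)%:Z%:~R) gez0_abs ?ltW // intrZ mulr_algl.
apply: (@algebraic_integer_quadratic _ (dq * numq p) (dp * dp * dq * numq q)).
rewrite !intrZ mulr_algl -scalerAl -scalerAr eyy mulr_algl !scalerA scalerDr !scalerA.
congr (_ *: _ + _ *: _); rewrite /D !intrM ?numqE -/dp -/dq; ring.
Qed.

Lemma exists_irrational_integer : exists2 b : K, algebraic_integer b & b \notin <[1]>%VS.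
Proof.
have /subvPn [y _ y_irr] : ~~ (fullv <= <[1 : K]>)%VS.
  by apply/negP => /dimvS; rewrite dimK2 dim_vline oner_neq0.
have [d d_gt0 dy_int] := exists_nat_scale_integral y.
exists (d%:R * y) => //; apply: contra y_irr => /vlineP [r edy].
have nd0 : (d%:R : K) != 0.
  by rewrite -(rmorph_nat (in_alg K)) fmorph_eq0 pnatr_eq0 -lt0n.
apply/vlineP; exists (r / d%:R); apply: (mulfI nd0).
rewrite edy mulr_algr -[d%:R : K]scaler_nat scalerA divfK //.
by rewrite pnatr_eq0 -lt0n.
Qed.

End QuadraticField.
End AlgebraicIntegers.

Section GroupRingUnits.
Variables (K : fieldExtType rat) (gT : finGroupType).
Implicit Types u v n : group_ring K gT.

Lemma group_ring_mulE u v x : (u * v) x = \sum_(y : gT) u y * v (y^-1 * x)%g.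
Proof. by rewrite /= ffunE. Qed.

Lemma group_ring_oneE x : (1 : group_ring K gT) x = (x == 1%g)%:R.
Proof. by rewrite /= ffunE. Qed.

Lemma augmentationD u v : augmentation (u + v) = augmentation u + augmentation v.
Proof. by rewrite /augmentation -big_split; apply: eq_bigr => x _; rewrite ffunE. Qed.

Lemma augmentation0 : augmentation (0 : group_ring K gT) = 0.
Proof. by rewrite /augmentation big1 // => x _; rewrite ffunE. Qed.

Lemma augmentation1 : augmentation (1 : group_ring K gT) = 1.
Proof.
rewrite /augmentation (bigD1 1%g) //= group_ring_oneE eqxx big1 ?addr0 // => x nx1.
by rewrite group_ring_oneE (negbTE nx1).
Qed.

Lemma augmentationM u v : augmentation (u * v) = augmentation u * augmentation v.
Proof.
rewrite /augmentation mulr_suml.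
under eq_bigr => x _ do rewrite group_ring_mulE.
rewrite exchange_big /=; apply: eq_bigr => y _; rewrite -mulr_sumr; congr (_ * _).
by rewrite (reindex_inj (mulgI y)) /=; apply: eq_bigr => x _; rewrite mulKg.
Qed.

Lemma in_OK_GD u v : in_OK_G u -> in_OK_G v -> in_OK_G (u + v).
Proof. by move=> ou ov x; rewrite ffunE; apply: algebraic_integerD (ou x) (ov x). Qed.

Lemma in_OK_GN u : in_OK_G u -> in_OK_G (- u).
Proof. by move=> ou x; rewrite ffunE; apply: algebraic_integerN (ou x). Qed.

Lemma in_OK_GZ (k : K) u : algebraic_integer k -> in_OK_G u -> in_OK_G (k *: u).
Proof. by move=> ok ou x; rewrite ffunE; apply: algebraic_integerM ok (ou x). Qed.

Lemma in_OK_G1 : in_OK_G (1 : group_ring K gT).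
Proof. by move=> x; rewrite group_ring_oneE; apply: algebraic_integer_nat. Qed.

Lemma in_OK_GM u v : in_OK_G u -> in_OK_G v -> in_OK_G (u * v).
Proof.
move=> ou ov x; rewrite group_ring_mulE.
apply: (big_ind (@algebraic_integer K)) => [||y _].
- exact: (algebraic_integer_nat K 0).
- exact: algebraic_integerD.
- exact: algebraic_integerM (ou y) (ov _).
Qed.

Lemma exists_nat_scale_in_OK_G (dimK2 : \dim (fullv : {vspace K}) = 2%N) u :
  exists2 m : nat, (0 < m)%N & in_OK_G (m%:R *: u).
Proof.
have [d d_gt0 d_int] :=
  fin_all_exists2 (fun x => exists_nat_scale_integral dimK2 (u x)).
exists (\prod_x d x)%N; first by apply: prodn_gt0.
move=> x; rewrite ffunE (bigD1 x) //= natrM -[_ *: _]/(_ * _) mulrAC.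
exact: algebraic_integerM (d_int x) (algebraic_integer_nat _ _).
Qed.

Lemma U1M u v : U1 u -> U1 v -> U1 (u * v).
Proof.
case=> ou [u' ou' [uu' u'u]] au [ov [v' ov' [vv' v'v]]] av; split.
- exact: in_OK_GM.
- exists (v' * u'); first exact: in_OK_GM.
  by split; rewrite -mulrA ?(mulrA v) ?(mulrA u') ?vv' ?u'u mul1r.
- by rewrite augmentationM au av mulr1.
Qed.

Lemma U1_1 : U1 (1 : group_ring K gT).
Proof.
split; [exact: in_OK_G1 | exists 1; rewrite ?mulr1 // | exact: augmentation1].
exact: in_OK_G1.
Qed.

Lemma U1_inv u : U1 u -> exists2 v, U1 v & u * v = 1 /\ v * u = 1.
Proof.
case=> ou [v ov [uv vu]] au; exists v => //; split=> //; first by exists u.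
by have := augmentationM u v; rewrite uv augmentation1 au mul1r.
Qed.

Lemma U1_1_add_square_zero n : in_OK_G n -> n * n = 0 -> U1 (1 + n).
Proof.
move=> on nn0; split.
- exact: in_OK_GD in_OK_G1 on.
- exists (1 - n); first exact: in_OK_GD in_OK_G1 (in_OK_GN on).
  split; first by rewrite mulrDl mul1r mulrBr mulr1 nn0 subr0 subrK.
  by rewrite mulrBl mul1r mulrDr mulr1 nn0 addr0 addrK.
- have : augmentation n ^+ 2 = 0 by rewrite expr2 -augmentationM nn0 augmentation0.
  move/eqP; rewrite expf_eq0 /= => /eqP an0.
  by rewrite augmentationD augmentation1 an0 addr0.
Qed.

End GroupRingUnits.

Lemma Wedderburn_M2_square_zero (F : fieldType) (A : lalgType F) :
  is_Wedderburn_component_Mn A 1 ->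
  exists2 n : A, n != 0 & forall a b : F, (a *: n) * (b *: n) = 0.
Proof.
case=> B [f [[g fK gK] f_lin [_ fM]]].
have f0 : f 0 = 0.
  by apply: (addrI (f 0)); rewrite -{1}[f 0]scale1r -f_lin scale1r !addr0.
have gZ k x : g (k *: x) = k *: g x.
  by apply: (can_inj fK); rewrite gK -[k *: g x]addr0 f_lin f0 addr0 gK.
have g0 : g 0 = 0 by rewrite -(scale0r 0) gZ scale0r.
have gM x y : g (x * y) = g x * g y by apply: (can_inj fK); rewrite fM !gK.
pose E : 'M[F]_2 * B := (delta_mx 0 1, 0).
exists (g E).
  apply: contra_neq (@oner_neq0 F) => gE0.
  by have := congr1 (fun x => (f x).1 0 1) gE0; rewrite /= gK -g0 gK !mxE.
move=> a b; rewrite -!gZ -gM -g0; congr g.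
apply/eqP; rewrite xpair_eqE /= !scaler0 mul0r eqxx andbT.
by rewrite -scalerAl -scalerAr -mulmxE mul_delta_mx_cond /= mulr0n !scaler0.
Qed.

Lemma Z2_embeds_in_U1 (K : fieldExtType rat) (gT : finGroupType)
    (n : group_ring K gT) :
  \dim (fullv : {vspace K}) = 2%N -> n != 0 ->
  (forall a b : K, (a *: n) * (b *: n) = 0) -> Z2_embeds_in (@U1 K gT).
Proof.
move=> dimK2 nn0 nZn.
have [beta beta_int beta_irr] := exists_irrational_integer dimK2.
have [m m_gt0 mn_int] := exists_nat_scale_in_OK_G dimK2 n.
pose nu (x : int * int) : K := (x.1%:~R + x.2%:~R * beta) * m%:R.
have nuD x y : nu (x + y) = nu x + nu y by rewrite /nu /= !intrD; ring.
have m_neq0 : m%:R != 0 :> K.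
  by rewrite -(rmorph_nat (in_alg K)) fmorph_eq0 pnatr_eq0 -lt0n.
have nu_inj : injective nu.
  move=> [a b] [a' b'] eab.
  have : ((a - a')%:~R : rat)%:A + ((b - b')%:~R : rat)%:A * beta = 0.
    apply: (mulIf m_neq0); rewrite mul0r !scaler_int -[RHS](subrr (nu (a, b))) {2}eab.
    by rewrite /nu /= !intrB; ring.
  case/(rat_combination_eq0 beta_irr)=> /eqP + /eqP.
  by rewrite !intr_eq0 !subr_eq0 => /eqP -> /eqP ->.
exists (fun x => 1 + nu x *: n); split.
- move=> x y /addrI /eqP; rewrite -subr_eq0 -scalerBl scaler_eq0 (negbTE nn0) orbF.
  by rewrite subr_eq0 => /eqP /nu_inj.
- move=> x; apply: U1_1_add_square_zero; last exact: nZn.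
  rewrite /nu -scalerA; apply: in_OK_GZ mn_int.
  apply: algebraic_integerD (algebraic_integer_int _ _) _.
  exact: algebraic_integerM (algebraic_integer_int _ _) beta_int.
- by move=> x y; rewrite mulrDr mulr1 mulrDl mul1r nZn addr0 nuD scalerDl addrA.
Qed.

Lemma half_double_bounds n : (2 * n./2 <= n <= 2 * n./2 + 1)%N.
Proof. by have := odd_double_half n; rewrite -mul2n; case: odd => /= e; lia. Qed.

Lemma ex_minimal_nat (P : nat -> Prop) :
  (exists n, P n) -> exists n, P n /\ forall m, P m -> (n <= m)%N.
Proof.
case=> n; elim/ltn_ind: n => n IH Pn.
have [[m lt_mn Pm]|no_less] := classic (exists2 m, (m < n)%N & P m).
  exact: IH lt_mn Pm.
exists n; split=> // m Pm; rewrite leqNgt; apply/negP => lt_mn.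
by apply: no_less; exists m.
Qed.

Lemma uniq_size_le_rel (T U : eqType) (R : T -> U -> Prop) (s : seq T) (t : seq U) :
  uniq s -> (forall x, x \in s -> exists2 y, y \in t & R x y) ->
  (forall x x' y, R x y -> R x' y -> x = x') -> (size s <= size t)%N.
Proof.
move=> + + R_inj; elim: t s => [|y t IH] s s_uniq s_t.
  by case: s s_uniq s_t => // x s _ /(_ x (mem_head _ _)) [].
have [[x xs Rxy]|no_y] := classic (exists2 x, x \in s & R x y); last first.
  apply/leqW/IH => // x xs; have [y'] := s_t x xs.
  rewrite in_cons => /predU1P [-> Rxy|]; [by case: no_y; exists x | by exists y'].
rewrite (perm_size (perm_to_rem xs)) /= ltnS; apply: IH; first exact: rem_uniq.
move=> x' x's; have [y'] := s_t x' (mem_rem x's).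
rewrite in_cons => /predU1P [-> Rx'y|]; last by exists y'.
by move: x's; rewrite mem_rem_uniq // inE (R_inj _ _ _ Rx'y Rxy) eqxx.
Qed.

Section WordMetric.
Variables (A : nzRingType) (H : A -> Prop) (S : seq A).
Hypothesis H_mul : forall x y, H x -> H y -> H (x * y).
Hypothesis H_1 : H 1.
Hypothesis H_inv : forall x, H x -> exists2 y, H y & x * y = 1 /\ y * x = 1.
Hypothesis S_H : forall s, s \in S -> H s.
Hypothesis S_inv : forall s, s \in S -> exists2 t, t \in S & s * t = 1 /\ t * s = 1.
Hypothesis S_gen : forall h, H h -> exists2 w, word_in S w & \prod_(s <- w) s = h.

Local Notation prodw w := (\prod_(s <- w) s).

Lemma H_mulIr p x y : H p -> x * p = y * p -> x = y.
Proof.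
by case/H_inv=> q _ [pq _] /(congr1 (fun z => z * q)); rewrite -!mulrA pq !mulr1.
Qed.

Lemma H_mulI p x y : H p -> p * x = p * y -> x = y.
Proof.
by case/H_inv=> q _ [_ qp] /(congr1 (fun z => q * z)); rewrite !mulrA qp !mul1r.
Qed.

Lemma word_in_cat w1 w2 : word_in S (w1 ++ w2) = word_in S w1 && word_in S w2.
Proof. exact: all_cat. Qed.

Lemma word_in_take t w : word_in S w -> word_in S (take t w).
Proof. by rewrite -{1}(cat_take_drop t w) word_in_cat => /andP []. Qed.

Lemma word_in_drop t w : word_in S w -> word_in S (drop t w).
Proof. by rewrite -{1}(cat_take_drop t w) word_in_cat => /andP []. Qed.

Lemma H_prodw w : word_in S w -> H (prodw w).
Proof.
elim: w => [|s w IH] /=; first by rewrite big_nil.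
by case/andP=> sS wS; rewrite big_cons; apply: H_mul (S_H sS) (IH wS).
Qed.

Lemma word_inverse w : word_in S w ->
  exists2 w', word_in S w' & size w' = size w /\ prodw w * prodw w' = 1.
Proof.
elim: w => [|s w IH] /=; first by exists [::]; rewrite ?big_nil ?mulr1.
case/andP=> /S_inv [t tS [st _]] /IH [w' w'S [size_w' ww']].
exists (w' ++ [:: t]); first by rewrite word_in_cat w'S /= tS.
split; first by rewrite size_cat size_w' addn1.
by rewrite big_cons big_cat /= big_seq1 mulrA -[s * _ * _]mulrA ww' mulr1.
Qed.

Definition dist (x y : A) : nat :=
  match excluded_middle_informative (exists n, word_dist S x y n) with
  | left ex_n => proj1_sig (constructive_indefinite_description _ ex_n)
  | right _ => 0%N
  end.

Lemma word_dist_dist x y : H x -> H y -> word_dist S x y (dist x y).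
Proof.
move=> Hx Hy; rewrite /dist; case: excluded_middle_informative => [ex_n|no_n].
  exact: (proj2_sig (constructive_indefinite_description _ ex_n)).
have [q Hq [xq qx]] := H_inv Hx; have [w wS ew] := S_gen (H_mul Hq Hy).
have [|n [[w' w'S [size_w' ew']] min_n]] :=
  ex_minimal_nat (P := fun n => exists2 w, word_in S w & size w = n /\ x * prodw w = y).
  by exists (size w), w; rewrite // ew mulrA xq mul1r.
by case: no_n; exists n; split; [exists w' | move=> w'' ? ?; apply: min_n; exists w''].
Qed.

Lemma dist_le_size x y w : H x -> H y -> word_in S w -> x * prodw w = y ->
  (dist x y <= size w)%N.
Proof. by move=> Hx Hy; case: (word_dist_dist Hx Hy) => _; apply. Qed.

Lemma dist_geodesic x y : H x -> H y ->
  exists2 w, word_in S w & size w = dist x y /\ x * prodw w = y.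
Proof. by move=> Hx Hy; case: (word_dist_dist Hx Hy). Qed.

Lemma dist_triangle x y z : H x -> H y -> H z -> (dist x z <= dist x y + dist y z)%N.
Proof.
move=> Hx Hy Hz.
have [w1 w1S [<- exy]] := dist_geodesic Hx Hy.
have [w2 w2S [<- eyz]] := dist_geodesic Hy Hz.
rewrite -size_cat; apply: dist_le_size; rewrite ?word_in_cat ?w1S //.
by rewrite big_cat mulrA exy.
Qed.

Lemma dist_refl x : H x -> dist x x = 0%N.
Proof.
move=> Hx; apply/eqP; rewrite -leqn0 -[0%N]/(size ([::] : seq A)).
by apply: dist_le_size; rewrite ?big_nil ?mulr1.
Qed.

Lemma dist_mull c x y : H c -> H x -> H y -> dist (c * x) (c * y) = dist x y.
Proof.
move=> Hc Hx Hy; apply/eqP; rewrite eqn_leq; apply/andP; split.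
  have [w wS [<- exy]] := dist_geodesic Hx Hy.
  by apply: dist_le_size (H_mul Hc Hx) (H_mul Hc Hy) wS _; rewrite -mulrA exy.
have [w wS [<- exy]] := dist_geodesic (H_mul Hc Hx) (H_mul Hc Hy).
by apply: dist_le_size => //; apply: (H_mulI Hc); rewrite mulrA.
Qed.

Lemma dist_sym x y : H x -> H y -> dist x y = dist y x.
Proof.
suff dist_le x' y' : H x' -> H y' -> (dist y' x' <= dist x' y')%N.
  by move=> Hx Hy; apply/eqP; rewrite eqn_leq !dist_le.
move=> Hx Hy; have [w wS [<- exy]] := dist_geodesic Hx Hy.
have [w' w'S [<- ww']] := word_inverse wS.
by apply: dist_le_size => //; rewrite -exy -mulrA ww' mulr1.
Qed.

Lemma dist1_mul x y : H x -> H y -> (dist 1 (x * y) <= dist 1 x + dist 1 y)%N.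
Proof.
move=> Hx Hy; rewrite -(dist_mull Hx H_1 Hy) mulr1.
exact: dist_triangle H_1 Hx (H_mul Hx Hy).
Qed.

Fixpoint ball (r : nat) : seq A :=
  if r is r'.+1 then ball r' ++ [seq x * s | x <- ball r', s <- S] else [:: 1].

Lemma prodw_in_ball r w : word_in S w -> (size w <= r)%N -> prodw w \in ball r.
Proof.
elim: r w => [|r IH] w.
  by case: w => // _ _; rewrite big_nil mem_seq1.
case/lastP: w => [|w s] wS size_w; rewrite /= mem_cat.
  by rewrite IH.
move: wS size_w; rewrite /word_in all_rcons size_rcons ltnS => /andP [sS wS] size_w.
by rewrite -cats1 big_cat big_seq1 allpairs_f ?orbT ?IH.
Qed.

Lemma dist_le_ball r x y : H x -> H y -> (dist x y <= r)%N ->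
  exists2 b, b \in ball r & x * b = y.
Proof.
move=> Hx Hy le_r; have [w wS [size_w exy]] := dist_geodesic Hx Hy.
by exists (prodw w); rewrite // prodw_in_ball // size_w.
Qed.

Lemma exists_far (f : nat -> A) (r : nat) : injective f -> (forall k, H (f k)) ->
  exists k, (r < dist 1 (f k))%N.
Proof.
move=> f_inj Hf; apply: NNPP => all_near.
have near k : (dist 1 (f k) <= r)%N.
  by rewrite leqNgt; apply/negP => far; apply: all_near; exists k.
suff : ((size (ball r)).+1 <= size (ball r))%N by rewrite ltnn.
rewrite -{1}(size_iota 0 (size (ball r)).+1) -(size_map f).
apply: uniq_leq_size; first by rewrite map_inj_uniq ?iota_uniq.
move=> _ /mapP [k _ ->]; have [b b_ball eb] := dist_le_ball H_1 (Hf k) (near k).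
by rewrite -eb mul1r.
Qed.

Section Hyperbolic.
Variable delta : nat.
Hypothesis four_point : forall (x y z w : A) (dxy dyz dxz dwx dwy dwz : nat),
  H x -> H y -> H z -> H w ->
  word_dist S x y dxy -> word_dist S y z dyz -> word_dist S x z dxz ->
  word_dist S w x dwx -> word_dist S w y dwy -> word_dist S w z dwz ->
  let gp_xz := (dwx%:Z + dwz%:Z - dxz%:Z)%R in
  let gp_xy := (dwx%:Z + dwy%:Z - dxy%:Z)%R in
  let gp_yz := (dwy%:Z + dwz%:Z - dyz%:Z)%R in
  (Num.min gp_xy gp_yz - (2 * delta)%:Z <= gp_xz)%R.

Lemma four_point_dist x y z w : H x -> H y -> H z -> H w ->
  (dist w x + dist w y + dist x z <= dist x y + dist w x + dist w z + 2 * delta)%N \/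
  (dist w y + dist w z + dist x z <= dist y z + dist w x + dist w z + 2 * delta)%N.
Proof.
move=> Hx Hy Hz Hw.
have := four_point Hx Hy Hz Hw (word_dist_dist Hx Hy) (word_dist_dist Hy Hz)
  (word_dist_dist Hx Hz) (word_dist_dist Hw Hx) (word_dist_dist Hw Hy)
  (word_dist_dist Hw Hz).
by rewrite /= lerBlDr ge_min => /orP [le_xy|le_yz]; [left|right]; lia.
Qed.

Section Geodesic.
Variables (g : A) (w : seq A).
Hypotheses (H_g : H g) (w_S : word_in S w).
Hypotheses (size_w : size w = dist 1 g) (prod_w : prodw w = g).

Local Notation pt t := (prodw (take t w)).

Lemma H_prefix t : H (pt t).
Proof. exact: H_prodw (word_in_take t w_S). Qed.

Lemma dist_prefix t : (t <= dist 1 g)%N ->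
  dist 1 (pt t) = t /\ dist (pt t) g = (dist 1 g - t)%N.
Proof.
move=> le_t.
have le1 : (dist 1 (pt t) <= t)%N.
  rewrite -{2}(size_takel (_ : t <= size w)%N) ?size_w //.
  by apply: dist_le_size H_1 (H_prefix t) (word_in_take t w_S) (mul1r _).
have le2 : (dist (pt t) g <= dist 1 g - t)%N.
  rewrite -size_w -size_drop; apply: dist_le_size (H_prefix t) H_g (word_in_drop t w_S) _.
  by rewrite -big_cat cat_take_drop.
have := dist_triangle H_1 (H_prefix t) H_g; lia.
Qed.

(* [V := c * pt s] lies on the translate [c * w] of the geodesic [w], at
   distance [s = (p | c * g)_c] from [c], where [p] is the midpoint of [w].
   As [c * g = g * c], the geodesics [w] and [c * w] have endpoints at
   distance [|c|] from each other, and three instances of the four point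
   condition put [V] within [4 delta + 1] of [p]. *)
Lemma commuting_near_midpoint c L : H c -> c * g = g * c -> (dist 1 c <= L)%N ->
  (2 * L + 4 * delta + 1 < dist 1 g)%N ->
  exists2 s, s \in iota ((dist 1 g)./2 - L) (2 * L + 1) &
    (dist (pt (dist 1 g)./2) (c * pt s) <= 4 * delta + 1)%N.
Proof.
move=> Hc cg_gc le_cL far_g.
set t0 := (dist 1 g)./2; set p := pt t0.
have Hp : H p := H_prefix t0.
have Hcg : H (c * g) := H_mul Hc H_g.
have ht0 := half_double_bounds (dist 1 g).
have [dp1 dpg] : dist 1 p = t0 /\ dist p g = (dist 1 g - t0)%N.
  by apply: dist_prefix; lia.
have d_c_cg : dist c (c * g) = dist 1 g by rewrite -{1}[c]mulr1 dist_mull.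
have d_g_cg : dist g (c * g) = dist 1 c by rewrite cg_gc -{1}[g]mulr1 dist_mull.
set s := (dist c p + dist 1 g - dist p (c * g))./2.
have hs := half_double_bounds (dist c p + dist 1 g - dist p (c * g)).
have t1 := dist_triangle H_1 Hc Hp; have t2 := dist_triangle Hc H_1 Hp.
have t3 := dist_triangle Hp Hcg H_g; have t4 := dist_triangle Hp H_g Hcg.
have s1 := dist_sym H_1 Hp; have s2 := dist_sym H_1 Hc; have s3 := dist_sym Hc Hp.
have s4 := dist_sym H_g Hcg.
have le_s : (s <= dist 1 g)%N by lia.
set V := c * pt s; have HV : H V := H_mul Hc (H_prefix s).
have d_c_V : dist c V = s.
  by rewrite /V -{1}[c]mulr1 (dist_mull Hc H_1 (H_prefix s)); case: (dist_prefix le_s).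
have d_V_cg : dist V (c * g) = (dist 1 g - s)%N.
  by rewrite /V (dist_mull Hc (H_prefix s) H_g); case: (dist_prefix le_s).
have s5 := dist_sym HV Hcg.
have q1 := four_point_dist H_1 Hc H_g Hp.
have q2 := four_point_dist Hc Hcg H_g Hp.
have q3 := four_point_dist Hp Hcg HV Hc.
exists s; first by rewrite mem_iota; lia.
rewrite -/V; lia.
Qed.

End Geodesic.

Lemma size_commuting_le g (cs : seq A) L : H g -> uniq cs ->
  (forall c, c \in cs -> [/\ H c, c * g = g * c & (dist 1 c <= L)%N]) ->
  (2 * L + 4 * delta + 1 < dist 1 g)%N ->
  (size cs <= (2 * L + 1) * size (ball (4 * delta + 1)))%N.
Proof.
move=> H_g cs_uniq cs_comm far_g; have [w wS [size_w prod_w]] := dist_geodesic H_1 H_g.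
rewrite mul1r in prod_w.
pose pt t := prodw (take t w); pose t0 := (dist 1 g)./2.
have -> : ((2 * L + 1) * size (ball (4 * delta + 1)))%N =
    size [seq (s, b) | s <- iota (t0 - L) (2 * L + 1), b <- ball (4 * delta + 1)].
  by rewrite size_allpairs size_iota.
apply: (@uniq_size_le_rel _ _ (fun c sb => c * pt sb.1 = pt t0 * sb.2)) => //.
  move=> c /cs_comm [Hc cg_gc le_cL].
  have [s s_iota near_s] :=
    commuting_near_midpoint H_g wS size_w prod_w Hc cg_gc le_cL far_g.
  have [b b_ball eb] := dist_le_ball (H_prefix wS t0) (H_mul Hc (H_prefix wS s)) near_s.
  by exists (s, b); rewrite ?allpairs_f.
by move=> c c' [s b] /= e e'; apply: (H_mulIr (H_prefix wS s)); rewrite e e'.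
Qed.

Section NoFreeAbelianRankTwo.
Variable phi : int * int -> A.
Hypotheses (phi_inj : injective phi) (phi_H : forall x, H (phi x)).
Hypothesis phiD : forall x y, phi (x + y) = phi x * phi y.

Lemma Z2_hom0 : phi 0 = 1.
Proof. by apply: (H_mulI (phi_H 0)); rewrite -phiD addr0 mulr1. Qed.

Lemma Z2_homC x y : phi x * phi y = phi y * phi x.
Proof. by rewrite -!phiD addrC. Qed.

Lemma dist1_Z2_hom (i j : nat) :
  (dist 1 (phi (i%:Z, j%:Z)) <=
     i * dist 1 (phi (1%:Z, 0%:Z)) + j * dist 1 (phi (0%:Z, 1%:Z)))%N.
Proof.
have phiS (x y : int) : phi (x, y) = phi (x - 1, y) * phi (1%:Z, 0%:Z) /\
                         phi (x, y) = phi (x, y - 1) * phi (0%:Z, 1%:Z).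
  by rewrite -!phiD; split; congr phi; apply/eqP; rewrite xpair_eqE /= subrK addr0 !eqxx.
elim: i => [|i IH].
  elim: j => [|j IH]; first by rewrite Z2_hom0 dist_refl.
  rewrite (phiS _ _).2 -addn1 PoszD addrK.
  apply: leq_trans (dist1_mul (phi_H _) (phi_H _)) _.
  by rewrite mulnDl mul1n addnA leq_add2r.
rewrite (phiS _ _).1 -addn1 PoszD addrK.
apply: leq_trans (dist1_mul (phi_H _) (phi_H _)) _.
by rewrite mulnDl mul1n addnAC leq_add2r.
Qed.

(* [N] is chosen so that the [N ^ 2] points of the grid, which commute with a
   far element and have length at most [L = N l], exceed the linear bound
   [(2 L + 1) beta] of [size_commuting_le]. *)
Lemma hyperbolic_Z2_contra : False.
Proof.
set l := (dist 1 (phi (1%:Z, 0%:Z)) + dist 1 (phi (0%:Z, 1%:Z)))%N.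
set beta := size (ball (4 * delta + 1)).
set N := (2 * l * beta + beta + 1)%N; set L := (N * l)%N.
have row_inj : injective (fun k : nat => phi (k%:Z, 0)) by move=> k k' /phi_inj [] [] ->.
have [n far_n] := exists_far (2 * L + 4 * delta + 1) row_inj (fun k => phi_H _).
set grid := [seq phi (i%:Z, j%:Z) | i <- iota 0 N, j <- iota 0 N].
have grid_uniq : uniq grid.
  apply: allpairs_uniq; rewrite ?iota_uniq // => [[i j] [i' j']] _ _ /=.
  by move=> /phi_inj [] [] -> [] ->.
have grid_comm c : c \in grid ->
    [/\ H c, c * phi (n%:Z, 0) = phi (n%:Z, 0) * c & (dist 1 c <= L)%N].
  case/allpairsP=> [[i j] [/=]]; rewrite !mem_iota /= => lt_i lt_j ->.
  split; [exact: phi_H | exact: Z2_homC | apply: leq_trans (dist1_Z2_hom i j) _].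
  by rewrite /L /l mulnDr; apply: leq_add; apply: leq_mul; rewrite // ltnW.
have := size_commuting_le (phi_H (n%:Z, 0)) grid_uniq grid_comm far_n.
rewrite size_allpairs !size_iota -/beta /L /N; nia.
Qed.

End NoFreeAbelianRankTwo.
End Hyperbolic.

End WordMetric.

Lemma not_hyperbolic_of_Z2_embeds (A : nzRingType) (H : A -> Prop) :
  (forall x y, H x -> H y -> H (x * y)) -> H 1 ->
  (forall x, H x -> exists2 y, H y & x * y = 1 /\ y * x = 1) ->
  Z2_embeds_in H -> ~ hyperbolic H.
Proof.
move=> H_mul H_1 H_inv [phi [phi_inj phi_H phiD]].
case=> S [S_H S_inv S_gen [delta four_point]].
exact: (hyperbolic_Z2_contra H_mul H_1 H_inv S_H S_inv S_gen (delta := delta)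
  four_point phi_inj phi_H phiD).
Qed.

Theorem mainTheorem12 (gT : finGroupType) (K : fieldExtType rat)
  (hK : \dim (fullv : {vspace K}) = 2%N) :
  is_Wedderburn_component_Mn (group_ring K gT) 1 ->
  Z2_embeds_in (@U1 K gT) /\ ~ hyperbolic (@U1 K gT).
Proof.
case/Wedderburn_M2_square_zero=> n n_neq0 n_sq0.
have Z2_U1 := Z2_embeds_in_U1 hK n_neq0 n_sq0.
split=> //; apply: not_hyperbolic_of_Z2_embeds Z2_U1.
- exact: U1M.
- exact: U1_1.
- exact: U1_inv.
Qed.
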